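(* Consider the two-agent zero-sum dynamic game described in the context (dynamics constraints only). Fix $t\in\{1,\dots,K-1\}$ and a state/control trajectory $(x_{1:K+1},u^1_{1:K},u^2_{1:K})$ generated by differentiable feedback policies $\pi^1_s,\pi^2_s$. Suppose that, for each agent $i\in\{1,2\}$, there are multipliers $\lambda^i_s$ ($s\in T_t$) and $\psi^i_s$ ($s\in T_{t+1}$) such that the time-$t$ feedback first-order conditions (FB1)–(FB6) hold for agent $i$ along this trajectory. Then necessarily $$\lambda^{-i}_s=-\lambda^i_s\quad\text{for all } s\in T_t,\qquad \psi^1_s=\psi^2_s=0\quad\text{for all } s\in T_{t+1}.$$ In particular, at any local FBNE the constraints forcing the other agent to follow its feedback policy have zero multipliers for both agents.
   Context: Two-agent zero-sum discrete-time dynamic game with horizon $K\in\mathbb N$. States $x_t\in\mathbb R^n$ ($t=1,\dots,K+1$), with known initial state $x_1$; controls $u^i_t\in\mathbb R^{m_i}$, $i\in\{1,2\}$, $t=1,\dots,K$. Dynamics $x_{t+1}=f_t(x_t,u^1_t,u^2_t)$ with $f_t$ smooth (possibly nonlinear). Agent 1 has stage costs $\ell_t(x_t,u^1_t,u^2_t)$ ($t\le K$) and terminal cost $\ell_{K+1}(x_{K+1})$; write $\ell^1_t=\ell_t$ and $\ell^2_t=-\ell_t$ (agent 2 minimizes the negative), costs sufficiently smooth (possibly nonconvex). For agent $i$, $-i$ denotes the other agent, and $\ell^i_t(x_t,u^i_t,u^{-i}_t)$, $f_t(x_t,u^i_t,u^{-i}_t)$ denote the same functions with arguments reordered. $T_t:=\{t,t+1,\dots,K\}$.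 Jacobians are denoted $\nabla$; all derivatives are evaluated along the trajectory. Feedback first-order conditions for agent $i$ at time $t$ (the KKT conditions of agent $i$'s problem of minimizing $\sum_{s=t}^K\ell^i_s+\ell^i_{K+1}$ over $u^i_{t:K}$, $u^{-i}_{t+1:K}$, $x_{t+1:K+1}$ subject to the dynamics for $s\in T_t$ and $u^{-i}_s=\pi^{-i}_s(x_s)$ for $s\in T_{t+1}$, with multipliers $\lambda^i_s$ for dynamics and $\psi^i_s$ for policy constraints): (FB1) $\nabla_{u^{-i}_s}\ell^i_s+(\nabla_{u^{-i}_s}f_s)^\top\lambda^i_s-\psi^i_s=0$, $s\in T_{t+1}$; (FB2) $\nabla_{u^i_s}\ell^i_s+(\nabla_{u^i_s}f_s)^\top\lambda^i_s=0$, $s\in T_t$; (FB3) $\nabla_{x_{K+1}}\ell^i_{K+1}-\lambda^i_K=0$; (FB4) $x_{s+1}=f_s(x_s,u^i_s,u^{-i}_s)$, $s\in T_t$; (FB5) $u^{-i}_s=\pi^{-i}_s(x_s)$, $s\in T_{t+1}$; (FB6) $\nabla_{x_s}\ell^i_s-\lambda^i_{s-1}+(\nabla_{x_s}f_s)^\top\lambda^i_s+(\nabla_{x_s}\pi^{-i}_s)^\top\psi^i_s=0$, $s\in T_{t+1}$. *)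

From HB Require Import structures.
From mathcomp Require Import all_boot all_order all_algebra.
From mathcomp Require Import all_classical all_reals all_analysis.
Set Implicit Arguments. Unset Strict Implicit. Unset Printing Implicit Defensive.
Import Order.TTheory GRing.Theory Num.Theory.
Import numFieldNormedType.Exports.
Local Open Scope ring_scope.

Definition jac (R : realType) (m n : nat) (F : 'cV[R]_n -> 'cV[R]_m)
  (x : 'cV[R]_n) : 'M[R]_(m, n) :=
  \matrix_(i < m, j < n) ('d F x (delta_mx j 0)) i 0.

Definition grad (R : realType) (n : nat) (F : 'cV[R]_n -> R)
  (x : 'cV[R]_n) : 'cV[R]_n :=
  \col_(j < n) ('d F x (delta_mx j 0)).

(* Arguments are reordered "own control first, other's
   control second": f s x u_own u_other, l s x u_own u_other, terminal
   cost lT, the other agent's policy pio, trajectory x, own controls ui,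
   other's controls uo, multipliers lam (dynamics) and psi (policy). *)
Definition FB_conditions (R : realType) (n mi mo : nat) (K t : nat)
  (f : nat -> 'cV[R]_n -> 'cV[R]_mi -> 'cV[R]_mo -> 'cV[R]_n)
  (l : nat -> 'cV[R]_n -> 'cV[R]_mi -> 'cV[R]_mo -> R)
  (lT : 'cV[R]_n -> R)
  (pio : nat -> 'cV[R]_n -> 'cV[R]_mo)
  (x : nat -> 'cV[R]_n) (ui : nat -> 'cV[R]_mi) (uo : nat -> 'cV[R]_mo)
  (lam : nat -> 'cV[R]_n) (psi : nat -> 'cV[R]_mo) : Prop :=
  (* FB1 *)
  (forall s, (t.+1 <= s <= K)%N ->
     grad (fun v => l s (x s) (ui s) v) (uo s)
     + (jac (fun v => f s (x s) (ui s) v) (uo s))^T *m lam s - psi s = 0)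
  /\ (* FB2 *)
  (forall s, (t <= s <= K)%N ->
     grad (fun v => l s (x s) v (uo s)) (ui s)
     + (jac (fun v => f s (x s) v (uo s)) (ui s))^T *m lam s = 0)
  /\ (* FB3 *)
  (grad lT (x K.+1) - lam K = 0)
  /\ (* FB4 *)
  (forall s, (t <= s <= K)%N -> x s.+1 = f s (x s) (ui s) (uo s))
  /\ (* FB5 *)
  (forall s, (t.+1 <= s <= K)%N -> uo s = pio s (x s))
  /\ (* FB6 *)
  (forall s, (t.+1 <= s <= K)%N ->
     grad (fun y => l s y (ui s) (uo s)) (x s) - lam s.-1
     + (jac (fun y => f s y (ui s) (uo s)) (x s))^T *m lam s
     + (jac (pio s) (x s))^T *m psi s = 0).

From HB Require Import structures.
From mathcomp Require Import all_boot all_order all_algebra.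
From mathcomp Require Import all_classical all_reals all_analysis.
From mathcomp Require Import zify.
Set Implicit Arguments. Unset Strict Implicit. Unset Printing Implicit Defensive.
Import Order.TTheory GRing.Theory Num.Theory.
Import numFieldNormedType.Exports.
Local Open Scope ring_scope.

(* Backward induction on s from K down to t.  Agent 2's conditions are
   agent 1's with the costs negated, so once [lam2 s = - lam1 s] every term of
   agent 2's (FB1)/(FB2) at time s is the negative of a term of agent 1's
   (FB2)/(FB1), except for the policy multiplier; comparing the two forces
   [psi1 s = psi2 s = 0].  Adding the two (FB6) equations then gives
   [lam2 s.-1 = - lam1 s.-1], and (FB3) starts the induction at s = K. *)

Lemma gradN {R : realType} {n} {g : 'cV[R]_n -> R} {y} :
  differentiable g y -> grad (fun v => - g v) y = - grad g y.
Proof. by move=> dg; apply/matrixP=> i j; rewrite !mxE (diffN dg). Qed.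

Lemma nat_down_ind (P : nat -> Prop) (t K : nat) :
  P K -> (forall s, (t < s <= K)%N -> P s -> P s.-1) ->
  forall s, (t <= s <= K)%N -> P s.
Proof.
move=> PK IH s /andP[ts sK].
suff PKk : forall k, (k <= K - t)%N -> P (K - k)%N.
  have -> : s = (K - (K - s))%N by lia.
  by apply: PKk; lia.
elim=> [|k IHk] hk; first by rewrite subn0.
have -> : (K - k.+1 = (K - k).-1)%N by lia.
by apply: IH; [apply/andP; split; lia | apply: IHk; lia].
Qed.

Section ZeroSumMultipliers.

Variables (R : realType) (n m1 m2 K t : nat).
Variables (f : nat -> 'cV[R]_n -> 'cV[R]_m1 -> 'cV[R]_m2 -> 'cV[R]_n)
  (l : nat -> 'cV[R]_n -> 'cV[R]_m1 -> 'cV[R]_m2 -> R) (lT : 'cV[R]_n -> R)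
  (pi1 : nat -> 'cV[R]_n -> 'cV[R]_m1) (pi2 : nat -> 'cV[R]_n -> 'cV[R]_m2)
  (x : nat -> 'cV[R]_n) (u1 : nat -> 'cV[R]_m1) (u2 : nat -> 'cV[R]_m2)
  (lam1 lam2 : nat -> 'cV[R]_n)
  (psi1 : nat -> 'cV[R]_m2) (psi2 : nat -> 'cV[R]_m1).

Hypothesis dl : forall s y v1 v2,
  [/\ differentiable (fun z => l s z v1 v2) y,
      differentiable (fun z => l s y z v2) v1 &
      differentiable (fun z => l s y v1 z) v2].
Hypothesis dlT : forall y, differentiable lT y.

Hypothesis FB1 : FB_conditions K t f l lT pi2 x u1 u2 lam1 psi1.
Hypothesis FB2 : FB_conditions K t (fun s y v2 v1 => f s y v1 v2)
  (fun s y v2 v1 => - l s y v1 v2) (fun y => - lT y) pi1 x u2 u1 lam2 psi2.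

Lemma lam_terminal : lam2 K = - lam1 K.
Proof.
case: FB1 => _ [_ [/eqP + _]]; rewrite subr_eq0 => /eqP lam1K.
case: FB2 => _ [_ [+ _]].
by rewrite (gradN (dlT _)) lam1K => /eqP; rewrite subr_eq0 eq_sym => /eqP.
Qed.

Section Step.

Variable s : nat.
Hypothesis hs : (t < s <= K)%N.
Hypothesis lamNs : lam2 s = - lam1 s.

Lemma psi_eq0 : psi1 s = 0 /\ psi2 s = 0.
Proof.
have hs' : (t <= s <= K)%N by case/andP: hs => /ltnW -> ->.
have [dlx dl1 dl2] := dl s (x s) (u1 s) (u2 s).
case: FB1 => /(_ s hs) a1 [/(_ s hs') a2 _].
case: FB2 => /(_ s hs) /= b1 [/(_ s hs') /= b2 _].
rewrite (gradN dl1) lamNs mulmxN -opprD a2 oppr0 sub0r in b1.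
rewrite (gradN dl2) lamNs mulmxN -opprD in b2.
move/eqP: b2; rewrite oppr_eq0 => /eqP b2.
rewrite b2 sub0r in a1.
by split; apply/eqP; rewrite -oppr_eq0 ?a1 ?b1.
Qed.

Lemma lam_pred : lam2 s.-1 = - lam1 s.-1.
Proof.
have [dlx _ _] := dl s (x s) (u1 s) (u2 s).
have [p1 p2] := psi_eq0.
case: FB1 => _ [_ [_ [_ [_ /(_ s hs) a6]]]].
case: FB2 => _ [_ [_ [_ [_ /(_ s hs) /= b6]]]].
rewrite p1 mulmx0 addr0 addrAC in a6.
rewrite p2 mulmx0 addr0 (gradN dlx) lamNs mulmxN addrAC -opprD in b6.
move/eqP: a6; rewrite subr_eq0 => /eqP a6.
by move/eqP: b6; rewrite subr_eq0 a6 eq_sym => /eqP.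
Qed.

End Step.

Lemma lamN s : (t <= s <= K)%N -> lam2 s = - lam1 s.
Proof.
apply: (@nat_down_ind (fun s => lam2 s = - lam1 s)); first exact: lam_terminal.
exact: lam_pred.
Qed.

End ZeroSumMultipliers.

Theorem mainTheorem1 (R : realType) (n m1 m2 K t : nat)
  (f : nat -> 'cV[R]_n -> 'cV[R]_m1 -> 'cV[R]_m2 -> 'cV[R]_n)
  (l : nat -> 'cV[R]_n -> 'cV[R]_m1 -> 'cV[R]_m2 -> R)
  (lT : 'cV[R]_n -> R)
  (pi1 : nat -> 'cV[R]_n -> 'cV[R]_m1)
  (pi2 : nat -> 'cV[R]_n -> 'cV[R]_m2)
  (x : nat -> 'cV[R]_n) (u1 : nat -> 'cV[R]_m1) (u2 : nat -> 'cV[R]_m2)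
  (lam1 lam2 : nat -> 'cV[R]_n)
  (psi1 : nat -> 'cV[R]_m2) (psi2 : nat -> 'cV[R]_m1) :
  (forall s y v1 v2,
     [/\ differentiable (fun z => f s z v1 v2) y,
         differentiable (fun z => f s y z v2) v1 &
         differentiable (fun z => f s y v1 z) v2] /\
     [/\ differentiable (fun z => l s z v1 v2) y,
         differentiable (fun z => l s y z v2) v1 &
         differentiable (fun z => l s y v1 z) v2]) ->
  (forall y, differentiable lT y) ->
  (forall s y, differentiable (pi1 s) y /\ differentiable (pi2 s) y) ->
  (1 <= t)%N -> (t < K)%N ->
  (forall s, (1 <= s <= K)%N ->
     [/\ u1 s = pi1 s (x s), u2 s = pi2 s (x s)
       & x s.+1 = f s (x s) (u1 s) (u2 s)]) ->
  FB_conditions K t f l lT pi2 x u1 u2 lam1 psi1 ->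
  FB_conditions K t (fun s y v2 v1 => f s y v1 v2)
    (fun s y v2 v1 => - l s y v1 v2) (fun y => - lT y)
    pi1 x u2 u1 lam2 psi2 ->
  (forall s, (t <= s <= K)%N -> lam2 s = - lam1 s /\ lam1 s = - lam2 s) /\
  (forall s, (t.+1 <= s <= K)%N -> psi1 s = 0 /\ psi2 s = 0).
Proof.
move=> dfl dlT _ _ _ _ FB1 FB2.
have dl s y v1 v2 := (dfl s y v1 v2).2.
have lamE s hs := lamN dl dlT FB1 FB2 (s := s) hs.
split=> [s hs | s hs]; first by rewrite lamE // opprK.
apply: (psi_eq0 dl FB1 FB2 hs); apply: lamE.
by case/andP: hs => /ltnW -> ->.
Qed.
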